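(* Let $\Omega\subseteq\mathbb{F}$ be a P-closed set with finite P-basis $\mathcal{B}$ and $n=\mathrm{Rk}(\Omega)$, and let $\mathcal{C}\subseteq\mathbb{F}^\mathcal{B}$ be a left linear code of dimension $k\ge1$. Then $\mathrm{d}_\mathcal{B}(\mathcal{C})=n-k+1$ (i.e. $\mathcal{C}$ is maximum skew distance) if and only if $\pi_{\mathcal{B},\mathcal{A}}(\mathcal{C})\subseteq\mathbb{F}^\mathcal{A}$ is MDS (has minimum Hamming distance $n-k+1$) for every P-basis $\mathcal{A}$ of $\Omega$.
   Context: $\mathbb{F}$ is a division ring, $\sigma$ a ring endomorphism, $\delta$ a $\sigma$-derivation; $\mathbb{F}[x;\sigma,\delta]$ the skew polynomial ring ($xa=\sigma(a)x+\delta(a)$), evaluation $F(a)$ defined by $F-F(a)\in\mathbb{F}[x;\sigma,\delta](x-a)$. P-closure $\overline\Omega$ is the common zero set of all skew polynomials vanishing on $\Omega$; P-closed, P-independent (no element in the P-closure of the others), P-basis (P-independent subset whose P-closure is $\Omega$); $\mathrm{Rk}(\Omega)$ is the common size of P-bases. $E_\mathcal{B}$ (evaluation on $\mathcal{B}$) is a bijection from skew polynomials of degree $<n$ onto $\mathbb{F}^\mathcal{B}$. Skew weight $\mathrm{wt}_\mathcal{B}(E_\mathcal{B}(F))=n-\mathrm{Rk}(Z(F)\cap\Omega)$; $\mathrm{d}_\mathcal{B}(\mathcal{C})$ is the minimum of $\mathrm{wt}_\mathcal{B}(f-g)$ over distinct $f,g\in\mathcal{C}$. $\pi_{\mathcal{B},\mathcal{A}}(E_\mathcal{B}(F))=E_\mathcal{A}(F)$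 for $\deg F<n$. *)

(* Skew polynomials F[x; sigma, delta] over a division ring F
   are represented by their (left) coefficient sequences in {poly F};
   only the additive structure of {poly F} is used, the skew product is
   defined below as [skmul]. *)
From Stdlib Require Import ClassicalEpsilon.
From HB Require Import structures.
From mathcomp Require Import all_boot all_order all_algebra.

Unset Strict Implicit. Unset Printing Implicit Defensive.
Import GRing.Theory.
Local Open Scope ring_scope.

Section Skew.
Context {F : unitRingType}.
Variables (sigma delta : F -> F).

(* x * G, using x a = sigma(a) x + delta(a) *)
Definition xmul (G : {poly F}) : {poly F} :=
  'X * map_poly sigma G + map_poly delta G.

Definition skmul (P G : {poly F}) : {poly F} :=
  \sum_(i < size P) (P`_i)%:P * iter (nat_of_ord i) xmul G.

Definition skeval (P : {poly F}) (a : F) : F :=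
  epsilon (inhabits 0) (fun b => exists Q : {poly F}, P - b%:P = skmul Q ('X - a%:P)).

Definition Pclos (S : F -> Prop) (a : F) : Prop :=
  forall P : {poly F}, (forall b, S b -> skeval P b = 0) -> skeval P a = 0.

Definition Pclosed (S : F -> Prop) : Prop := forall a, Pclos S a -> S a.

Definition Pindep (B : seq F) : Prop :=
  forall i, (i < size B)%N ->
    ~ Pclos (fun a => exists j, [/\ (j < size B)%N, j != i & a = nth 0 B j]) (nth 0 B i).

Definition PBasis (S : F -> Prop) (B : seq F) : Prop :=
  [/\ forall b, b \in B -> S b, Pindep B & forall a, Pclos (fun b => b \in B) a <-> S a].

Definition Rk (S : F -> Prop) : nat :=
  epsilon (inhabits 0%N) (fun m => exists B, size B = m /\ PBasis S B).

Definition Evec (B : seq F) (P : {poly F}) : 'rV[F]_(size B) :=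
  \row_(i < size B) skeval P (nth 0 B i).

Definition polyOf (B : seq F) (c : 'rV[F]_(size B)) : {poly F} :=
  epsilon (inhabits 0) (fun P : {poly F} => (size P <= size B)%N /\ Evec B P = c).

Definition skew_wt (Om : F -> Prop) (B : seq F) (c : 'rV[F]_(size B)) : nat :=
  (Rk Om - Rk (fun a => Om a /\ skeval (polyOf B c) a = 0%R))%N.

Definition piBA (B A : seq F) (C : 'rV[F]_(size B) -> Prop) : 'rV[F]_(size A) -> Prop :=
  fun c' => exists c, C c /\ c' = Evec A (polyOf B c).

End Skew.

Definition ham_wt (F : unitRingType) (m : nat) (c : 'rV[F]_m) : nat :=
  #|[pred i : 'I_m | c 0 i != 0]|.

Definition min_dist_is (F : unitRingType) (m : nat) (wt : 'rV[F]_m -> nat)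
  (C : 'rV[F]_m -> Prop) (d : nat) : Prop :=
  (exists f g, [/\ C f, C g, f <> g & wt (f - g)%R = d]) /\
  (forall f g, C f -> C g -> f <> g -> (d <= wt (f - g)%R)%N).

Definition left_code_dim (F : unitRingType) (m : nat) (C : 'rV[F]_m -> Prop) (k : nat) : Prop :=
  exists v : 'I_k -> 'rV[F]_m,
    (forall a : 'I_k -> F, \sum_i a i *: v i = 0 -> forall i, a i = 0) /\
    (forall c, C c <-> exists a : 'I_k -> F, c = \sum_i a i *: v i).

Arguments ham_wt {F m} c.
Arguments min_dist_is {F m} wt C d.
Arguments left_code_dim {F m} C k.

From HB Require Import structures.
From mathcomp Require Import all_boot all_order all_algebra zify.
From Stdlib Require Import ClassicalEpsilon FunctionalExtensionality.
Import GRing.Theory.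
Local Open Scope ring_scope.
Set Implicit Arguments. Unset Strict Implicit.

(* Evaluation of skew polynomials is [F(a) = sum_i f_i N_i(a)], and a finite
   P-independent set [T] has a monic minimal polynomial [G_T] of degree [|T|], an
   iterated skew product of linear factors, whose zero set is the P-closure of [T].
   Hence [E_B] is bijective and [Rk] is the size of any P-basis.  For [c = E_B(P)]
   and any P-basis [A] of [Omega], the points of [A] where [P] vanishes form an
   independent subset of [Z(P) /\ Omega], so the Hamming weight of [E_A(P)] is at
   least [n - Rk(Z(P) /\ Omega) = wt_B(c)]; extending a P-basis of [Z(P) /\ Omega]
   to one of [Omega] gives an [A] with equality.  As every [pi_{B,A}] is injective
   and left linear, [d_B(C)] is the minimum over [A] of the Hamming distance of
   [pi_{B,A}(C)], and each of these is at most [n - k + 1] by the Singleton bound. *)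

Lemma big_ord_widen_eq0 (V : nmodType) (f : nat -> V) n m :
  (n <= m)%N -> (forall i, (n <= i)%N -> f i = 0) ->
  \sum_(i < n) f i = \sum_(i < m) f i.
Proof.
move=> le_nm f0; rewrite (big_ord_widen _ _ le_nm) big_mkcond /=.
by apply: eq_bigr => i _; case: ltnP => // /f0.
Qed.

Lemma card_ord_nth (T : Type) (x0 : T) (s : seq T) (p : pred T) :
  #|[pred i : 'I_(size s) | p (nth x0 s i)]| = count p s.
Proof.
rewrite -sum1_card -(big_mkord (fun i => p (nth x0 s i)) (fun _ => 1%N)).
by rewrite /index_iota subn0 sum1_count -count_map -/(mkseq _ _) mkseq_nth.
Qed.

Lemma count_leq_size_drop (T : Type) (x0 : T) (p : pred T) (s : seq T) m :
  (forall j, (j < m)%N -> ~~ p (nth x0 s j)) -> (count p s <= size s - m)%N.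
Proof.
move=> pN; rewrite -(cat_take_drop m s) count_cat.
have -> : count p (take m s) = 0%N.
  apply/eqP; rewrite -leqn0 leqNgt -has_count; apply/(has_nthP x0) => -[j].
  by rewrite size_take_min ltn_min => /andP[jm js]; rewrite nth_take // (negbTE (pN j jm)).
by rewrite add0n cat_take_drop (leq_trans (count_size _ _)) ?size_drop.
Qed.

Section LeftLinearAlgebra.
Variable F : unitRingType.
Hypothesis unitF : forall a : F, a != 0 -> a \is a GRing.unit.

(* MathComp's rank theory needs a commutative field; over a division ring we
   eliminate by hand, pivoting on equation [m]. *)
Lemma nontrivial_left_relation m k (M : 'I_k -> nat -> F) : (m < k)%N ->
  exists2 a : 'I_k -> F, exists i, a i != 0 &
    forall j, (j < m)%N -> \sum_i a i * M i j = 0.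
Proof.
elim: m k M => [|m IH] k M lt_mk.
  by exists (fun=> 1) => //; exists (Ordinal lt_mk); rewrite oner_neq0.
case: (pickP (fun i => M i m != 0)) => [i0 /= pivot | no_pivot].
  case: k M i0 lt_mk pivot => [M [] //|k] M i0 lt_mk pivot.
  set p := M i0 m.
  pose M' (i : 'I_k) j := M (lift i0 i) j - M (lift i0 i) m * p^-1 * M i0 j.
  have [b [i1 b_i1] b_sol] := IH k M' lt_mk.
  pose c := - \sum_i b i * M (lift i0 i) m * p^-1.
  exists (fun i => if unlift i0 i is Some i' then b i' else c).
    by exists (lift i0 i1); rewrite liftK.
  move=> j lt_jm; rewrite (bigD1_ord i0) //= unlift_none.
  under eq_bigr => i _ do rewrite liftK.
  rewrite ltnS leq_eqVlt in lt_jm; case/orP: lt_jm => [/eqP ->|lt_jm].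
    rewrite /c mulNr mulr_suml (eq_bigr (fun i => b i * M (lift i0 i) m)) ?addNr //.
    by move=> i _; rewrite divrK //; apply: unitF.
  have := b_sol j lt_jm; rewrite /M' /=; under eq_bigr => i _ do rewrite mulrBr.
  rewrite sumrB => /eqP; rewrite subr_eq0 => /eqP ->.
  by rewrite /c mulNr mulr_suml addrC -sumrB big1 // => i _; rewrite !mulrA subrr.
have [a a_nz a_sol] := IH k M (ltnW lt_mk); exists a => // j.
rewrite ltnS leq_eqVlt => /orP[/eqP -> | /a_sol //].
by apply: big1 => i _; move/negbFE/eqP: (no_pivot i) => ->; rewrite mulr0.
Qed.

End LeftLinearAlgebra.

Lemma size_map_poly_leq (R : nzSemiRingType) (f : R -> R) (p : {poly R}) :
  (size (map_poly f p) <= size p)%N.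
Proof. by rewrite map_polyE (leq_trans (size_Poly _)) // size_map. Qed.

Lemma size_subr_lt_lead (R : nzRingType) (p q : {poly R}) :
  size p = size q -> lead_coef p = lead_coef q -> (0 < size p)%N ->
  (size (p - q)%R < size p)%N.
Proof.
move=> size_pq lc_pq; case size_p: (size p) => [|n] // _.
apply/leq_sizeP => i; rewrite coefB leq_eqVlt => /orP[/eqP <-|lt_ni].
  by move: lc_pq; rewrite !lead_coefE -size_pq size_p => ->; rewrite subrr.
by rewrite !nth_default ?subrr // -?size_pq size_p.
Qed.

Section SkewPolynomials.
Variable F : unitRingType.
Hypothesis unitF : forall a : F, a != 0 -> a \is a GRing.unit.
Variable sigma : {rmorphism F -> F}.
Variable delta : F -> F.
Hypothesis deltaD : forall a b : F, delta (a + b) = delta a + delta b.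
Hypothesis deltaM : forall a b : F, delta (a * b) = sigma a * delta b + delta a * b.

Notation xm := (xmul sigma delta).
Notation sk := (skmul sigma delta).

Lemma delta0 : delta 0 = 0.
Proof. by apply: (addrI (delta 0)); rewrite -deltaD !addr0. Qed.

Lemma delta1 : delta 1 = 0.
Proof.
have := deltaM 1 1; rewrite rmorph1 !mul1r mulr1 => d1.
by apply: (addrI (delta 1)); rewrite -d1 addr0.
Qed.

Lemma delta_sum I (r : seq I) (P : pred I) (f : I -> F) :
  delta (\sum_(i <- r | P i) f i) = \sum_(i <- r | P i) delta (f i).
Proof. exact: (big_morph delta deltaD delta0). Qed.

(* Lam and Leroy: [skeval P a = sum_i p_i N_i(a)], where [N_i(a)] is the i-th
   iterate at 1 of the pseudo-linear map [T_a(g) = sigma(g) a + delta(g)], i.e.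
   left multiplication by [x] on [F[x;sigma,delta] / F[x;sigma,delta] (x - a)]. *)
Definition pslin (a g : F) := sigma g * a + delta g.
Definition nfun (a : F) (i : nat) := iter i (pslin a) 1.
Definition skev (P : {poly F}) (a : F) := \sum_(i < size P) P`_i * nfun a i.

Lemma iter_pslin0 a i : iter i (pslin a) 0 = 0.
Proof. by elim: i => //= i ->; rewrite /pslin rmorph0 mul0r delta0 addr0. Qed.

Lemma skev_widen m (P : {poly F}) a : (size P <= m)%N ->
  skev P a = \sum_(i < m) P`_i * nfun a i.
Proof.
move=> le_Pm; apply: (big_ord_widen_eq0 (f := fun i => P`_i * nfun a i)) => // i le_Pi.
by rewrite nth_default ?mul0r.
Qed.

Lemma skev0 a : skev 0 a = 0.
Proof. by rewrite /skev size_poly0 big_ord0. Qed.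

Lemma skevD (P Q : {poly F}) a : skev (P + Q) a = skev P a + skev Q a.
Proof.
pose m := maxn (size P) (size Q).
rewrite (@skev_widen m) ?(@skev_widen m P) ?(@skev_widen m Q) ?leq_maxl ?leq_maxr //.
  by rewrite -big_split; apply: eq_bigr => i _; rewrite coefD mulrDl.
by rewrite (leq_trans (size_polyD _ _)).
Qed.

Lemma skevZ c (P : {poly F}) a : skev (c *: P) a = c * skev P a.
Proof.
rewrite (@skev_widen (size P)) ?size_scale_leq // /skev mulr_sumr.
by apply: eq_bigr => i _; rewrite coefZ mulrA.
Qed.

Lemma skevN (P : {poly F}) a : skev (- P) a = - skev P a.
Proof. by rewrite -scaleN1r skevZ mulN1r. Qed.

Lemma skevB (P Q : {poly F}) a : skev (P - Q) a = skev P a - skev Q a.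
Proof. by rewrite skevD skevN. Qed.

Lemma skevC c a : skev c%:P a = c.
Proof. by rewrite (@skev_widen 1) ?size_polyC_leq1 // big_ord1 coefC mulr1. Qed.

Lemma skev_sum I (r : seq I) (Pr : pred I) (f : I -> {poly F}) a :
  skev (\sum_(i <- r | Pr i) f i) a = \sum_(i <- r | Pr i) skev (f i) a.
Proof. exact: (big_morph (skev^~ a) (fun P Q => skevD P Q a) (skev0 a)). Qed.

Lemma skev_xmul (G : {poly F}) a : skev (xm G) a = pslin a (skev G a).
Proof.
have le_XG : (size ('X * map_poly sigma G)%R <= (size G).+1)%N.
  by rewrite (leq_trans (size_polyMleq _ _)) // size_polyX; exact: size_map_poly_leq.
rewrite /xmul skevD (skev_widen a le_XG) (@skev_widen (size G) (map_poly delta G));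
  last exact: size_map_poly_leq.
rewrite big_ord_recl coefXM eqxx mul0r add0r.
rewrite /pslin /skev rmorph_sum mulr_suml delta_sum -!big_split /=.
apply: eq_bigr => i _; rewrite coefXM /= !coef_map_id0 ?rmorph0 ?delta0 //.
by rewrite /pslin deltaM rmorphM mulrDr !addrA !mulrA.
Qed.

Lemma skev_iter_xmul i G a : skev (iter i xm G) a = iter i (pslin a) (skev G a).
Proof. by elim: i => //= i IH; rewrite skev_xmul IH. Qed.

Lemma skmul_widen m (Q G : {poly F}) : (size Q <= m)%N ->
  sk Q G = \sum_(i < m) Q`_i *: iter i xm G.
Proof.
move=> le_Qm; rewrite /skmul.
under eq_bigr => i _ do rewrite mul_polyC.
apply: (big_ord_widen_eq0 (f := fun i => Q`_i *: iter i xm G)) => // i le_Qi.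
by rewrite nth_default // scale0r.
Qed.

Lemma skmul0 G : sk 0 G = 0.
Proof. by rewrite /skmul size_poly0 big_ord0. Qed.

Lemma skmulD Q1 Q2 G : sk (Q1 + Q2) G = sk Q1 G + sk Q2 G.
Proof.
pose m := maxn (size Q1) (size Q2).
rewrite (@skmul_widen m) ?(@skmul_widen m Q1) ?(@skmul_widen m Q2) ?leq_maxl ?leq_maxr //.
  by rewrite -big_split; apply: eq_bigr => i _; rewrite coefD scalerDl.
by rewrite (leq_trans (size_polyD _ _)).
Qed.

Lemma skmulZ c Q G : sk (c *: Q) G = c *: sk Q G.
Proof.
rewrite (@skmul_widen (size Q)) ?size_scale_leq // (@skmul_widen (size Q)) //.
by rewrite scaler_sumr; apply: eq_bigr => i _; rewrite coefZ scalerA.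
Qed.

Lemma skmulXn j G : sk 'X^j G = iter j xm G.
Proof.
rewrite (@skmul_widen j.+1) ?size_polyXn // big_ord_recr /= coefXn eqxx scale1r.
by rewrite big1 ?add0r // => i _; rewrite coefXn ltn_eqF ?scale0r.
Qed.

Lemma skmul1 G : sk 1 G = G.
Proof. by rewrite -(expr0 'X) skmulXn. Qed.

Lemma skev_skmul Q G a :
  skev (sk Q G) a = \sum_(i < size Q) Q`_i * iter i (pslin a) (skev G a).
Proof.
rewrite (@skmul_widen (size Q)) // skev_sum.
by apply: eq_bigr => i _; rewrite skevZ skev_iter_xmul.
Qed.

Lemma skev_skmul_root Q G a : skev G a = 0 -> skev (sk Q G) a = 0.
Proof. by move=> Ga0; rewrite skev_skmul Ga0 big1 // => i _; rewrite iter_pslin0 mulr0. Qed.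

Lemma skev_skmul_XsubC b G a :
  skev (sk ('X - b%:P) G) a = pslin a (skev G a) - b * skev G a.
Proof. by rewrite skev_skmul polyseqXsubC big_ord_recl big_ord1 /= mul1r mulNr addrC. Qed.

Lemma skev_XsubC a : skev ('X - a%:P) a = 0.
Proof.
rewrite (@skev_widen 2) ?size_XsubC // big_ord_recl big_ord1 polyseqXsubC /=.
by rewrite /nfun /= /pslin mulr1 mul1r rmorph1 mul1r delta1 addr0 addNr.
Qed.

Lemma xmul_monic (G : {poly F}) :
  G \is monic -> xm G \is monic /\ size (xm G) = (size G).+1.
Proof.
move=> monG; have lcG : lead_coef G = 1 by apply/eqP; rewrite -monicE.
have size_sG : size (map_poly sigma G) = size G.
  by rewrite size_map_poly_id0 // lcG rmorph1 oner_neq0.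
have lc_sG : lead_coef (map_poly sigma G) = 1.
  by rewrite lead_coef_map_id0 ?rmorph0 ?lcG ?rmorph1 ?oner_neq0.
have sG_nz : map_poly sigma G != 0 by rewrite -lead_coef_eq0 lc_sG oner_neq0.
have XC : 'X * map_poly sigma G = map_poly sigma G * 'X by rewrite commr_polyX.
have size_XsG : size ('X * map_poly sigma G) = (size G).+1 by rewrite XC size_mulX // size_sG.
have lt_dX : (size (map_poly delta G) < size ('X * map_poly sigma G)%R)%N.
  by rewrite size_XsG ltnS size_map_poly_leq.
by rewrite /xmul monicE lead_coefDl // size_polyDl // size_XsG XC lead_coefMX lc_sG.
Qed.

Lemma iter_xmul_monic i (G : {poly F}) :
  G \is monic -> iter i xm G \is monic /\ size (iter i xm G) = (size G + i)%N.
Proof.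
move=> monG; elim: i => [|i [mon_i size_i]] /=; first by rewrite addn0.
by have [-> ->] := xmul_monic mon_i; rewrite size_i addnS.
Qed.

Lemma size_scale_monic (c : F) (M : {poly F}) : c != 0 -> M \is monic ->
  size (c *: M) = size M /\ lead_coef (c *: M) = c.
Proof.
move=> c_nz monM; rewrite -mul_polyC size_Mmonic ?polyC_eq0 // size_polyC c_nz.
by rewrite lead_coef_Mmonic // lead_coefC.
Qed.

Lemma skmul_monic (Q G : {poly F}) : G \is monic -> Q != 0 ->
  size (sk Q G) = (size Q + size G).-1 /\ lead_coef (sk Q G) = lead_coef Q.
Proof.
move=> monG Q_nz; have : lead_coef Q != 0 by rewrite lead_coef_eq0.
rewrite lead_coefE (@skmul_widen (size Q)) //.
have : size Q != 0%N by rewrite size_poly_eq0.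
case: (size Q) => [|q] // _ /= lcQ_nz; rewrite big_ord_recr /=.
have [mon_q size_q] := iter_xmul_monic q monG.
have [size_top lc_top] := size_scale_monic lcQ_nz mon_q.
suff lt_low : (size (\sum_(i < q) Q`_i *: iter i xm G)%R < size (Q`_q *: iter q xm G)%R)%N.
  by rewrite addrC size_polyDl // lead_coefDl // size_top lc_top size_q addnC.
rewrite size_top size_q; case: q {lcQ_nz mon_q size_q size_top lc_top} => [|q].
  by rewrite big_ord0 size_poly0 addn0 size_poly_gt0 monic_neq0.
rewrite addnS ltnS (leq_trans (size_sum _ _ _)) //; apply/bigmax_leqP => i _.
by rewrite (leq_trans (size_scale_leq _ _)) // (iter_xmul_monic i monG).2 leq_add2l -ltnS.
Qed.

Lemma skmul_divr G : G \is monic ->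
  forall P, exists Q R, P = sk Q G + R /\ (size R < size G)%N.
Proof.
move=> monG P; have size_G : (0 < size G)%N by rewrite size_poly_gt0 monic_neq0.
move: {2}(size P) (leqnn (size P)) => n; elim: n P => [|n IH] P size_P.
  by exists 0, P; rewrite skmul0 add0r; move: size_P; rewrite leqn0 => /eqP ->.
have [lt_PG|le_GP] := ltnP (size P) (size G); first by exists 0, P; rewrite skmul0 add0r.
pose c := lead_coef P; pose j := (size P - size G)%N.
have c_nz : c != 0 by rewrite lead_coef_eq0 -size_poly_eq0 -lt0n (leq_trans size_G).
pose M := c *: iter j xm G.
have [size_M lc_M] := size_scale_monic c_nz (iter_xmul_monic j monG).1.
rewrite (iter_xmul_monic j monG).2 subnKC // in size_M.
have lt_PM := size_subr_lt_lead (esym size_M) (esym lc_M) (leq_trans size_G le_GP).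
have [Q [R [PMQR size_R]]] := IH (P - M) (leq_trans lt_PM size_P).
exists (Q + c *: 'X^j), R; split => //.
by rewrite skmulD skmulZ skmulXn addrAC -PMQR subrK.
Qed.

Lemma skeval_skev (P : {poly F}) a : skeval sigma delta P a = skev P a.
Proof.
rewrite /skeval; set rem_a := fun b : F => _.
have ex_rem : exists b, rem_a b.
  have [Q [R [PQR size_R]]] := skmul_divr (monicXsubC a) P.
  rewrite size_XsubC in size_R; rewrite (size1_polyC size_R) in PQR.
  by exists R`_0, Q; rewrite PQR addrK.
have [Q PQ] := epsilon_spec (inhabits 0) rem_a ex_rem.
have := congr1 (skev^~ a) PQ; rewrite /= skev_skmul_root ?skev_XsubC // skevB skevC.
by move/eqP; rewrite subr_eq0 => /eqP.
Qed.

Lemma skevalE : skeval sigma delta = skev.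
Proof. by do 2 apply: functional_extensionality => ?; apply: skeval_skev. Qed.

(* For [g = G_S(s) != 0], the factor [x - T_s(g) g^-1] is the one making
   [(x - b) G_S] vanish at [s] (see [skev_skmul_XsubC]). *)
Fixpoint skminpoly (S : seq F) : {poly F} :=
  if S is s :: S' then
    let G := skminpoly S' in let g := skev G s in
    if g == 0 then G else sk ('X - (pslin s g * g^-1)%:P) G
  else 1.

(* Equivalent to P-independence, see [PindepE] and [pindep_Pfree]. *)
Fixpoint Pfree (S : seq F) : Prop :=
  if S is s :: S' then Pfree S' /\ skev (skminpoly S') s != 0 else True.

Lemma skmul_XsubC_monic b (G : {poly F}) : G \is monic ->
  sk ('X - b%:P) G \is monic /\ size (sk ('X - b%:P) G) = (size G).+1.
Proof.
move=> monG; have [size_XG lc_XG] := skmul_monic monG (monic_neq0 (monicXsubC b)).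
by rewrite monicE lc_XG lead_coefXsubC size_XG size_XsubC.
Qed.

Lemma skminpoly_monic S :
  skminpoly S \is monic /\ (size (skminpoly S) <= (size S).+1)%N.
Proof.
elim: S => [|s S [monG size_G]] /=; first by rewrite monic1 size_poly1.
case: ifP => _; first by rewrite monG (leq_trans size_G).
by have [-> ->] := skmul_XsubC_monic (pslin s (skev (skminpoly S) s) *
  (skev (skminpoly S) s)^-1) monG.
Qed.

Lemma skminpoly_neq0 S : skminpoly S != 0.
Proof. exact: monic_neq0 (skminpoly_monic S).1. Qed.

Lemma size_skminpoly S : Pfree S -> size (skminpoly S) = (size S).+1.
Proof.
elim: S => [|s S IH] /=; first by rewrite size_poly1.
move=> [freeS g_nz]; rewrite (negbTE g_nz).
by rewrite (skmul_XsubC_monic _ (skminpoly_monic S).1).2 IH.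
Qed.

Lemma skminpoly_root S s : s \in S -> skev (skminpoly S) s = 0.
Proof.
elim: S => [|t S IH] //=; rewrite in_cons => /orP sS.
case: ifP => [/eqP g0|g_nz]; first by case: sS => [/eqP ->|/IH].
case: sS => [/eqP ->|/IH Gs0]; last by rewrite skev_skmul_root.
by rewrite skev_skmul_XsubC divrK ?subrr // unitF ?g_nz.
Qed.

Lemma Pfree_root_small_eq0 S (P : {poly F}) : Pfree S ->
  (size P <= size S)%N -> (forall s, s \in S -> skev P s = 0) -> P = 0.
Proof.
elim: S P => [|s S IH] P /=; first by rewrite leqn0 size_poly_eq0 => _ /eqP.
move=> [freeS g_nz] size_P P_root; have monG := (skminpoly_monic S).1.
have [Q [R [PQR size_R]]] := skmul_divr monG P.
have R0 : R = 0.
  apply: (IH R freeS); first by rewrite -ltnS -(size_skminpoly freeS).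
  move=> t tS; have /P_root : t \in s :: S by rewrite in_cons tS orbT.
  by rewrite PQR skevD skev_skmul_root ?add0r // skminpoly_root.
rewrite R0 addr0 in PQR; have [Q0|Q_nz] := eqVneq Q 0; first by rewrite PQR Q0 skmul0.
have size_Q : (size Q <= 1)%N.
  move: size_P; rewrite PQR (skmul_monic monG Q_nz).1 size_skminpoly //=.
  by case: (size Q) => [|q] //; rewrite addSn /=; lia.
have PcG : P = sk (Q`_0)%:P (skminpoly S) by rewrite PQR -(size1_polyC size_Q).
have c0 : Q`_0 = 0.
  have := P_root s (mem_head _ _); rewrite PcG -alg_polyC skmulZ skmul1 skevZ => cg0.
  by rewrite -(mulrK (unitF g_nz) Q`_0) cg0 mul0r.
by rewrite PcG c0 skmul0.
Qed.

Lemma Pfree_root_rdvd S (P : {poly F}) : Pfree S ->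
  (forall s, s \in S -> skev P s = 0) -> exists Q, P = sk Q (skminpoly S).
Proof.
move=> freeS P_root; have [Q [R [PQR size_R]]] := skmul_divr (skminpoly_monic S).1 P.
exists Q; suff R0 : R = 0 by rewrite PQR R0 addr0.
apply: (Pfree_root_small_eq0 freeS); first by rewrite -ltnS -(size_skminpoly freeS).
move=> t tS; have := P_root t tS.
by rewrite PQR skevD skev_skmul_root ?add0r // skminpoly_root.
Qed.

Lemma Pfree_root_size_gt S (P : {poly F}) : Pfree S -> P != 0 ->
  (forall s, s \in S -> skev P s = 0) -> (size S < size P)%N.
Proof.
move=> freeS P_nz P_root; have [Q PQ] := Pfree_root_rdvd freeS P_root.
have Q_nz : Q != 0 by apply: contraNneq P_nz => Q0; rewrite PQ Q0 skmul0.
rewrite PQ (skmul_monic (skminpoly_monic S).1 Q_nz).1 size_skminpoly //.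
by move: Q_nz; rewrite -size_poly_eq0; case: (size Q) => [|q] // _; rewrite addSn /= ltn_addl.
Qed.

Definition pclos (S : F -> Prop) a :=
  forall P, (forall b, S b -> skev P b = 0) -> skev P a = 0.

Lemma PclosE : Pclos sigma delta = pclos.
Proof. by rewrite /Pclos skevalE. Qed.

Lemma pclosS (S1 S2 : F -> Prop) a :
  (forall b, S1 b -> S2 b) -> pclos S1 a -> pclos S2 a.
Proof. by move=> S12 S1a P P_root; apply: S1a => b /S12 /P_root. Qed.

Lemma pclos_id (S : F -> Prop) a : S a -> pclos S a.
Proof. by move=> Sa P; apply. Qed.

Lemma pclos_skminpoly S a :
  Pfree S -> pclos (fun b => b \in S) a <-> skev (skminpoly S) a = 0.
Proof.
move=> freeS; split; first by apply; apply: skminpoly_root.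
by move=> Ga0 P /(Pfree_root_rdvd freeS) [Q ->]; apply: skev_skmul_root.
Qed.

Definition pindep (S : seq F) :=
  uniq S /\ forall x, x \in S -> ~ pclos (fun b => b \in rem x S) x.

Lemma Pfree_uniq S : Pfree S -> uniq S.
Proof.
elim: S => [|s S IH] //= [freeS g_nz]; rewrite IH // andbT.
by apply: contra g_nz => /skminpoly_root ->.
Qed.

Lemma Pfree_pindep S : Pfree S -> pindep S.
Proof.
move=> freeS; have uniqS := Pfree_uniq freeS; split => // x xS x_clos.
apply: (negP (skminpoly_neq0 (rem x S))); apply/eqP.
apply: (Pfree_root_small_eq0 freeS).
  by rewrite (leq_trans (skminpoly_monic _).2) // size_rem // prednK //; case: (S) xS.
move=> y yS; have [->|yx] := eqVneq y x.
  by apply: x_clos => b; apply: skminpoly_root.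
by apply: skminpoly_root; rewrite mem_rem_uniq // inE yx.
Qed.

Lemma pindep_Pfree S : pindep S -> Pfree S.
Proof.
elim: S => [|s S IH] //= [/andP[sS uniqS] indep_sS].
have indepS : pindep S.
  split => // x xS x_clos; apply: (indep_sS x); first by rewrite in_cons xS orbT.
  have -> : rem x (s :: S) = s :: rem x S.
    by rewrite /= ifN_eq //; apply: contraNneq sS => ->.
  by apply: pclosS x_clos => b bS; rewrite in_cons bS orbT.
have freeS := IH indepS; split => //; apply/negP => /eqP Gs0.
by apply: (indep_sS s (mem_head _ _)); rewrite /= eqxx; apply/pclos_skminpoly.
Qed.

Lemma pindep_filter (p : pred F) S : pindep S -> pindep (filter p S).
Proof.
move=> [uniqS indepS]; have uniq_pS := filter_uniq p uniqS; split => // x.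
rewrite mem_filter => /andP[px xS] x_clos; apply: (indepS x xS).
apply: pclosS x_clos => b; rewrite !mem_rem_uniq // !inE mem_filter.
by case/andP => -> /andP[_ ->].
Qed.

Lemma PindepE S : Pindep sigma delta S <-> pindep S.
Proof.
rewrite /Pindep PclosE; split => [indepS | [uniqS indepS] i lt_iS x_clos]; last first.
  apply: (indepS _ (mem_nth 0 lt_iS)); apply: pclosS x_clos => b [j [lt_jS ji ->]].
  by rewrite mem_rem_uniq // inE mem_nth // andbT nth_uniq.
have uniqS : uniq S.
  apply/(uniqPn 0) => -[i [j [lt_ij lt_jS eq_ij]]].
  apply: (indepS i (ltn_trans lt_ij lt_jS)); apply: pclos_id.
  by exists j; rewrite eq_sym neq_ltn lt_ij.
split => // x xS x_clos; have lt_xS : (index x S < size S)%N by rewrite index_mem.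
apply: (indepS _ lt_xS); rewrite nth_index //; apply: pclosS x_clos => b.
rewrite mem_rem_uniq // inE => /andP[bx bS].
exists (index b S); rewrite index_mem nth_index //; split => //.
by apply: contra bx => /eqP eq_bx; rewrite -(nth_index 0 bS) eq_bx nth_index.
Qed.

Lemma PBasisP (Om : F -> Prop) A : PBasis sigma delta Om A <->
  [/\ forall b, b \in A -> Om b, Pfree A & forall a, skev (skminpoly A) a = 0 <-> Om a].
Proof.
rewrite /PBasis PclosE.
split => [[AOm /PindepE/pindep_Pfree freeA A_clos] | [AOm freeA A_zero]].
  by split => // a; rewrite -(pclos_skminpoly _ freeA).
by split => // [|a]; [apply/PindepE/Pfree_pindep | rewrite pclos_skminpoly].
Qed.

Lemma Pfree_size_eq A A' : Pfree A -> Pfree A' ->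
  (forall a, skev (skminpoly A) a = 0 <-> skev (skminpoly A') a = 0) ->
  size A = size A'.
Proof.
move=> freeA freeA' sameZ; apply/eqP; rewrite eqn_leq.
have := Pfree_root_size_gt freeA (skminpoly_neq0 A')
  (fun t tA => proj1 (sameZ t) (skminpoly_root tA)).
have := Pfree_root_size_gt freeA' (skminpoly_neq0 A)
  (fun t tA' => proj2 (sameZ t) (skminpoly_root tA')).
by rewrite !size_skminpoly // !ltnS => -> ->.
Qed.

Lemma RkE (Om : F -> Prop) A : PBasis sigma delta Om A -> Rk sigma delta Om = size A.
Proof.
move=> basisA; rewrite /Rk; set has_basis := fun m => _.
have [A' [<- basisA']] :=
  epsilon_spec (inhabits 0%N) has_basis (ex_intro _ _ (ex_intro _ A (conj erefl basisA))).
move/PBasisP: basisA => [_ freeA A_zero]; move/PBasisP: basisA' => [_ freeA' A'_zero].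
by apply: Pfree_size_eq => // a; rewrite A_zero A'_zero.
Qed.

Lemma Pfree_interpolation S (f : nat -> F) : Pfree S -> exists2 P : {poly F},
  (size P <= size S)%N & forall i, (i < size S)%N -> skev P (nth 0 S i) = f i.
Proof.
elim: S f => [|s S IH] f /=; first by exists 0; rewrite ?size_poly0.
move=> [freeS g_nz]; have [P size_P P_S] := IH (f \o succn) freeS.
pose c := (f 0%N - skev P s) * (skev (skminpoly S) s)^-1.
exists (P + c *: skminpoly S).
  rewrite (leq_trans (size_polyD _ _)) // geq_max (leq_trans size_P) //=.
  by rewrite (leq_trans (size_scale_leq _ _)) // size_skminpoly.
case=> [|i] lt_iS; rewrite skevD skevZ /=; first by rewrite divrK ?unitF // addrC subrK.
by rewrite P_S // skminpoly_root ?mulr0 ?addr0 // mem_nth.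
Qed.

Notation Ev := (Evec sigma delta).
Notation pOf := (polyOf sigma delta).

Lemma EvecE A (P : {poly F}) : Ev A P = \row_i skev P (nth 0 A i).
Proof. by rewrite /Evec skevalE. Qed.

Lemma Evec0 A : Ev A 0 = 0.
Proof. by rewrite EvecE; apply/rowP => j; rewrite !mxE skev0. Qed.

Lemma EvecD A (P Q : {poly F}) : Ev A (P + Q) = Ev A P + Ev A Q.
Proof. by rewrite !EvecE; apply/rowP => j; rewrite !mxE skevD. Qed.

Lemma EvecZ A c (P : {poly F}) : Ev A (c *: P) = c *: Ev A P.
Proof. by rewrite !EvecE; apply/rowP => j; rewrite !mxE skevZ. Qed.

Lemma Evec_eq_root A (P Q : {poly F}) :
  Ev A P = Ev A Q -> forall s, s \in A -> skev (P - Q) s = 0.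
Proof.
rewrite !EvecE => EPQ s sA; have lt_sA : (index s A < size A)%N by rewrite index_mem.
have := congr1 (fun M : 'rV_(size A) => M 0 (Ordinal lt_sA)) EPQ.
by rewrite /= !mxE nth_index // skevB => ->; rewrite subrr.
Qed.

Lemma polyOfP A c : Pfree A -> (size (pOf A c) <= size A)%N /\ Ev A (pOf A c) = c.
Proof.
move=> freeA; apply: (epsilon_spec (inhabits 0)
  (fun P : {poly F} => (size P <= size A)%N /\ Ev A P = c)).
pose f i := if insub i is Some j then c 0 j else 0.
have [P size_P P_A] := Pfree_interpolation f freeA.
by exists P; split => //; rewrite EvecE; apply/rowP => j; rewrite !mxE P_A // /f valK.
Qed.

Lemma EvecK A (P : {poly F}) : Pfree A -> (size P <= size A)%N -> pOf A (Ev A P) = P.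
Proof.
move=> freeA size_P; have [size_pOf EpOf] := polyOfP (Ev A P) freeA.
apply/eqP; rewrite -subr_eq0; apply/eqP; apply: (Pfree_root_small_eq0 freeA).
  by rewrite (leq_trans (size_polyD _ _)) // size_polyN geq_max size_pOf.
exact: Evec_eq_root.
Qed.

Section PolyOfLinear.
Variable A : seq F.
Hypothesis freeA : Pfree A.

Lemma polyOf0 : pOf A 0 = 0.
Proof. by rewrite -(Evec0 A) EvecK // size_poly0. Qed.

Lemma polyOfZ c v : pOf A (c *: v) = c *: pOf A v.
Proof.
have [size_v Ev_v] := polyOfP v freeA.
by rewrite -{1}Ev_v -EvecZ EvecK // (leq_trans (size_scale_leq _ _)).
Qed.

Lemma polyOfD v w : pOf A (v + w) = pOf A v + pOf A w.
Proof.
have [size_v Ev_v] := polyOfP v freeA; have [size_w Ev_w] := polyOfP w freeA.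
by rewrite -{1}Ev_v -{1}Ev_w -EvecD EvecK // (leq_trans (size_polyD _ _)) // geq_max size_v.
Qed.

Lemma polyOfB v w : pOf A (v - w) = pOf A v - pOf A w.
Proof. by rewrite polyOfD -scaleN1r polyOfZ scaleN1r. Qed.

End PolyOfLinear.

Lemma Pfree_extend (Y : F -> Prop) N T0 :
  (forall T, Pfree T -> (forall t, t \in T -> Y t) -> (size T <= N)%N) ->
  Pfree T0 -> (forall t, t \in T0 -> Y t) ->
  exists U, [/\ Pfree (U ++ T0), (forall t, t \in U ++ T0 -> Y t) &
            forall a, Y a -> skev (skminpoly (U ++ T0)) a = 0].
Proof.
move=> bounded.
have saturated T : Pfree T -> (forall t, t \in T -> Y t) ->
    ~ (exists2 a, Y a & skev (skminpoly T) a != 0) ->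
  exists U, [/\ Pfree (U ++ T), (forall t, t \in U ++ T -> Y t) &
            forall a, Y a -> skev (skminpoly (U ++ T)) a = 0].
  move=> freeT YT all_root; exists [::]; split => // a Ya.
  by apply/eqP/negPn/negP => g_nz; apply: all_root; exists a.
move: {2}(N - size T0)%N (leqnn (N - size T0)) => d.
elim: d T0 => [|d IH] T0 le_d freeT0 YT0;
  (have [[a Ya g_nz]|] := classic (exists2 a, Y a & skev (skminpoly T0) a != 0);
   last exact: saturated _ freeT0 YT0);
  have Y_aT0 t : t \in a :: T0 -> Y t by rewrite in_cons => /predU1P[->|/YT0].
- by have := bounded (a :: T0) (conj freeT0 g_nz) Y_aT0; rewrite /=; lia.
- have [|U [freeU YU U_root]] := IH (a :: T0) _ (conj freeT0 g_nz) Y_aT0.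
    by rewrite /=; lia.
  by exists (rcons U a); rewrite cat_rcons.
Qed.

Section PBasisOfOmega.
Variables (Om : F -> Prop) (B : seq F).
Hypotheses (closedOm : Pclosed sigma delta Om) (basisB : PBasis sigma delta Om B).

Lemma Om_pclos a : pclos Om a -> Om a.
Proof. by move: closedOm; rewrite /Pclosed PclosE; apply. Qed.

Lemma Pfree_basis : Pfree B.
Proof. by case/PBasisP: basisB. Qed.

Lemma basis_root a : skev (skminpoly B) a = 0 <-> Om a.
Proof. by case/PBasisP: basisB. Qed.

Lemma Pfree_size_le T : Pfree T -> (forall t, t \in T -> Om t) -> (size T <= size B)%N.
Proof.
move=> freeT TOm.
have := Pfree_root_size_gt freeT (skminpoly_neq0 B)
  (fun t tT => proj2 (basis_root t) (TOm t tT)).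
by rewrite size_skminpoly ?ltnS //; apply: Pfree_basis.
Qed.

Lemma size_basis A : PBasis sigma delta Om A -> size A = size B.
Proof. by move=> basisA; rewrite -(RkE basisA) (RkE basisB). Qed.

Definition Zset (P : {poly F}) a := Om a /\ skev P a = 0.

Lemma Zset_basis P : exists T, [/\ Pfree T, (forall t, t \in T -> Zset P t) &
  forall a, skev (skminpoly T) a = 0 <-> Zset P a].
Proof.
have bounded T : Pfree T -> (forall t, t \in T -> Zset P t) -> (size T <= size B)%N.
  by move=> freeT TZ; apply: Pfree_size_le => // t /TZ[].
have [U []] := Pfree_extend bounded (I : Pfree [::]) (fun t t_nil => False_ind _ (notF t_nil)).
rewrite cats0 => freeU UZ U_root; exists U; split => // a; split => [Ua0|]; last exact: U_root.
have a_clos : pclos (fun b => b \in U) a by apply/pclos_skminpoly.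
split; first by apply: Om_pclos; apply: pclosS a_clos => b /UZ[].
by apply: a_clos => b /UZ[].
Qed.

Lemma count_nonroot_ge P T A :
  Pfree T -> (forall a, skev (skminpoly T) a = 0 <-> Zset P a) ->
  Pfree A -> (forall a, a \in A -> Om a) ->
  (size A - size T <= count (fun a => skev P a != 0%R) A)%N.
Proof.
move=> freeT T_root freeA AOm; pose A0 := filter (fun a => skev P a == 0) A.
have freeA0 : Pfree A0 by apply/pindep_Pfree/pindep_filter/Pfree_pindep.
have A0_root t : t \in A0 -> skev (skminpoly T) t = 0.
  by rewrite mem_filter => /andP[/eqP Pt0 tA]; apply/T_root; split => //; apply: AOm.
have := Pfree_root_size_gt freeA0 (skminpoly_neq0 T) A0_root.
rewrite size_skminpoly // ltnS size_filter.
have := count_predC (fun a => skev P a == 0) A.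
by rewrite (@eq_count _ (predC _) (fun a => skev P a != 0)) //; lia.
Qed.

Lemma count_nonroot_attained P T : Pfree T -> (forall t, t \in T -> Zset P t) ->
  (forall a, skev (skminpoly T) a = 0 <-> Zset P a) ->
  exists2 A, PBasis sigma delta Om A &
    count (fun a => skev P a != 0) A = (size A - size T)%N.
Proof.
move=> freeT TZ T_root.
have [U [freeUT UT_Om UT_root]] := Pfree_extend Pfree_size_le freeT (fun t tT => (TZ t tT).1).
exists (U ++ T).
  apply/PBasisP; split => // a; split => [Ga0|]; last exact: UT_root.
  by apply: Om_pclos; apply: pclosS (proj2 (pclos_skminpoly _ freeUT) Ga0) => b /UT_Om.
rewrite count_cat size_cat addnK.
have -> : count (fun a => skev P a != 0) T = 0%N.
  by apply/eqP; rewrite -leqn0 leqNgt -has_count; apply/hasPn => t /TZ[_ ->]; rewrite eqxx.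
rewrite addn0 -[RHS]count_predT; apply: eq_in_count => u uU /=.
apply/negP => /eqP Pu0; have [uniqUT indepUT] := Pfree_pindep freeUT.
apply: (indepUT u); first by rewrite mem_cat uU.
have : pclos (fun b => b \in T) u.
  by apply/(pclos_skminpoly _ freeT)/T_root; split => //; apply: UT_Om; rewrite mem_cat uU.
apply: pclosS => b bT; rewrite mem_rem_uniq // inE mem_cat bT orbT andbT.
move: uniqUT; rewrite cat_uniq => /and3P[_ UT_disj _].
by apply: contraNneq UT_disj => bu; apply/hasP; exists b; rewrite // bu.
Qed.

Notation wt := (skew_wt sigma delta Om B).

Definition piB (A : seq F) (c : 'rV[F]_(size B)) := Ev A (pOf B c).

Lemma piB0 A : piB A 0 = 0.
Proof. by rewrite /piB (polyOf0 Pfree_basis) Evec0. Qed.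

Lemma piBB c : piB B c = c.
Proof. exact: (polyOfP c Pfree_basis).2. Qed.

Lemma piB_sub A c d : piB A (c - d) = piB A c - piB A d.
Proof. by rewrite /piB (polyOfB Pfree_basis) EvecD -scaleN1r EvecZ scaleN1r. Qed.

Lemma ham_wt_piB A c : ham_wt (piB A c) = count (fun a => skev (pOf B c) a != 0) A.
Proof.
rewrite /ham_wt /piB EvecE -(card_ord_nth 0 A (fun a => skev (pOf B c) a != 0)).
by apply: eq_card => i; rewrite !inE mxE.
Qed.

Lemma piB_eq0 A c : PBasis sigma delta Om A -> piB A c = 0 -> c = 0.
Proof.
move=> basisA piAc0; have [_ freeA _] := proj1 (PBasisP Om A) basisA.
have [size_c <-] := polyOfP c Pfree_basis.
suff -> : pOf B c = 0 by rewrite Evec0.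
apply: (Pfree_root_small_eq0 freeA); first by rewrite (size_basis basisA).
move=> s sA; have := Evec_eq_root (_ : Ev A (pOf B c) = Ev A 0) sA.
by rewrite subr0; apply; rewrite Evec0.
Qed.

Lemma skew_wtE c : exists T, [/\ Pfree T, (forall t, t \in T -> Zset (pOf B c) t),
  (forall a, skev (skminpoly T) a = 0 <-> Zset (pOf B c) a) & wt c = (size B - size T)%N].
Proof.
have [T [freeT TZ T_root]] := Zset_basis (pOf B c).
exists T; split => //; rewrite /skew_wt (RkE basisB) skevalE; congr (_ - _)%N.
by apply/RkE/PBasisP.
Qed.

Lemma skew_wt_le_ham A c : PBasis sigma delta Om A -> (wt c <= ham_wt (piB A c))%N.
Proof.
move=> basisA; have [AOm freeA _] := proj1 (PBasisP Om A) basisA.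
have [T [freeT _ T_root ->]] := skew_wtE c.
by rewrite ham_wt_piB -(size_basis basisA) count_nonroot_ge.
Qed.

Lemma skew_wt_attained c : exists2 A, PBasis sigma delta Om A & ham_wt (piB A c) = wt c.
Proof.
have [T [freeT TZ T_root ->]] := skew_wtE c.
have [A basisA countA] := count_nonroot_attained freeT TZ T_root.
by exists A; rewrite // ham_wt_piB countA (size_basis basisA).
Qed.

Lemma projections_mds_msd (C : 'rV[F]_(size B) -> Prop) d :
  (forall A, PBasis sigma delta Om A ->
    min_dist_is (@ham_wt F (size A)) (piBA sigma delta B A C) d) ->
  min_dist_is wt C d.
Proof.
move=> mds.
have wt_ge f g : C f -> C g -> f <> g -> (d <= wt (f - g))%N.
  move=> Cf Cg fg; have [A basisA <-] := skew_wt_attained (f - g).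
  rewrite piB_sub; apply: (mds A basisA).2; [by exists f | by exists g |].
  move=> eq_fg; apply/fg/subr0_eq/(piB_eq0 basisA).
  by rewrite piB_sub eq_fg subrr.
split => //; have [[f' [g' [[f [Cf ->]] [g [Cg ->]] piBfg dist_fg]]] _] := mds B basisB.
rewrite (polyOfP f Pfree_basis).2 (polyOfP g Pfree_basis).2 in piBfg dist_fg.
exists f, g; split => //.
by apply/eqP; rewrite eqn_leq wt_ge // -dist_fg -{2}(piBB (f - g)) skew_wt_le_ham.
Qed.

Section LinearCode.
Variables (C : 'rV[F]_(size B) -> Prop) (k : nat).
Hypotheses (dimC : left_code_dim C k) (k_gt0 : (0 < k)%N).

Lemma code0 : C 0.
Proof.
have [v [_ Cv]] := dimC; apply/Cv; exists (fun=> 0).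
by rewrite big1 // => i _; rewrite scale0r.
Qed.

Lemma code_dim_le : (k <= size B)%N.
Proof.
have [v [v_indep _]] := dimC; rewrite leqNgt; apply/negP => lt_Bk.
pose M i j := if insub j is Some j' then v i 0 j' else 0.
have [a [i a_nz] a_rel] := nontrivial_left_relation unitF M lt_Bk.
move/eqP: a_nz; apply; apply: (v_indep a); apply/rowP => j.
rewrite summxE mxE -[RHS](a_rel j (ltn_ord j)).
by apply: eq_bigr => i' _; rewrite !mxE /M valK.
Qed.

(* Singleton bound: [k - 1] left linear conditions can be imposed on a nonzero
   codeword, namely vanishing at the first [k - 1] points of [A]. *)
Lemma singleton_codeword A : PBasis sigma delta Om A ->
  exists c, [/\ C c, c != 0 & (ham_wt (piB A c) <= size B - k + 1)%N].
Proof.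
move=> basisA; have [v [v_indep Cv]] := dimC.
have lt_k1k : (k.-1 < k)%N by rewrite prednK.
pose M i j := skev (pOf B (v i)) (nth 0 A j).
have [a [i a_nz] a_rel] := nontrivial_left_relation unitF M lt_k1k.
pose c := \sum_i a i *: v i.
have pOf_c : pOf B c = \sum_i a i *: pOf B (v i).
  rewrite (big_morph _ (polyOfD Pfree_basis) (polyOf0 Pfree_basis)).
  by apply: eq_bigr => i' _; rewrite (polyOfZ Pfree_basis).
exists c; split; first by apply/Cv; exists a.
  by apply: contra a_nz => /eqP /v_indep ->.
have -> : (size B - k + 1 = size A - k.-1)%N.
  by rewrite (size_basis basisA); have := code_dim_le; lia.
rewrite ham_wt_piB; apply: count_leq_size_drop => j lt_jk.
rewrite negbK pOf_c skev_sum; apply/eqP; rewrite -[RHS](a_rel j lt_jk).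
by apply: eq_bigr => i' _; rewrite skevZ.
Qed.

Lemma msd_projections_mds : min_dist_is wt C (size B - k + 1)%N ->
  forall A, PBasis sigma delta Om A ->
    min_dist_is (@ham_wt F (size A)) (piBA sigma delta B A C) (size B - k + 1)%N.
Proof.
move=> [_ wt_ge] A basisA; split.
  have [c [Cc c_nz ham_c]] := singleton_codeword basisA.
  exists (piB A c), (piB A 0); split.
  - by exists c.
  - by exists 0; split => //; exact: code0.
  - by rewrite piB0 => /(piB_eq0 basisA) /eqP; rewrite (negbTE c_nz).
  - apply/eqP; rewrite eqn_leq piB0 subr0 ham_c /=.
    have := wt_ge c 0 Cc code0 (fun c0 => negP c_nz (introT eqP c0)).
    by rewrite subr0 => /leq_trans; apply; apply: skew_wt_le_ham.
move=> _ _ [f [Cf ->]] [g [Cg ->]] piAfg; rewrite -piB_sub.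
have fg : f <> g by move=> eq_fg; apply: piAfg; rewrite eq_fg.
exact: leq_trans (wt_ge f g Cf Cg fg) (skew_wt_le_ham _ basisA).
Qed.

End LinearCode.
End PBasisOfOmega.
End SkewPolynomials.

Theorem mainTheorem5 (F : unitRingType)
  (hdiv : forall a : F, a != 0 -> a \is a GRing.unit)
  (sigma : {rmorphism F -> F}) (delta : F -> F)
  (hdadd : forall a b : F, delta (a + b) = delta a + delta b)
  (hdmul : forall a b : F, delta (a * b) = sigma a * delta b + delta a * b)
  (Om : F -> Prop) (hOm : Pclosed sigma delta Om)
  (B : seq F) (hB : PBasis sigma delta Om B)
  (C : 'rV[F]_(size B) -> Prop) (k : nat) (hC : left_code_dim C k) (hk : (1 <= k)%N) :
  min_dist_is (skew_wt sigma delta Om B) C (Rk sigma delta Om - k + 1)%N <->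
  (forall A : seq F, PBasis sigma delta Om A ->
     min_dist_is (@ham_wt F (size A)) (piBA sigma delta B A C) (Rk sigma delta Om - k + 1)%N).
Proof.
rewrite (RkE hdiv hdadd hdmul hB); split.
  exact: (msd_projections_mds hdiv hdadd hdmul hOm hB hC hk).
exact: (projections_mds_msd hdiv hdadd hdmul hOm hB).
Qed.
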